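(* For every sufficiently small $\nu>0$ there exists $\alpha_0>0$ such that for all $\alpha,\varepsilon\in(0,\alpha_0]$ there exists $\gamma_0>0$ such that for all $\gamma\in(0,\gamma_0]$ there exists $n_0$ such that for all $n\ge n_0$: every graph $G$ on $n$ vertices with $\delta(G)\ge n/2$ that is $\gamma$-close to $K_{n/2,n/2}$ is an $(\alpha,\varepsilon,\nu)$-superextremal biclique.
   Context: A graph $G$ on $n$ vertices is $\gamma$-close to $K_{n/2,n/2}$ if there exists $A\subseteq V(G)$ with $|A|=\lfloor n/2\rfloor$ such that $G[A]$ has at most $\gamma n^2$ edges. $d(v,X)$ is the number of neighbours of $v$ in $X$. A graph $G$ on $n$ vertices is an $(\alpha,\varepsilon,\nu)$-superextremal biclique if there is a partition $V(G)=A\uplus B$ with: (B1) $0\le |B|-|A|\le\alpha n$; (B2) $d(a,B)\ge(1/2-\varepsilon)n$ for all but at most $\alpha n$ vertices $a\in A$; (B3) $d(a,B)\ge\nu n$ for all $a\in A$; (B4) $d(b,A)\ge(1/2-\varepsilon)n$ for all but at most $\alpha n$ vertices $b\in B$; (B5) $d(b,A)\ge(1/4-\varepsilon)n$ for all $b\in B$; (B6) if $|A|\ne\lfloor n/2\rfloor$, then $d(b,B)\le 2\nu n$ for all $b\in B$. *)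

From HB Require Import structures.
From mathcomp Require Import all_boot all_order all_algebra.
Set Implicit Arguments. Unset Strict Implicit. Unset Printing Implicit Defensive.
Import Order.TTheory GRing.Theory Num.Theory.
Local Open Scope ring_scope.

Definition simple_graph (n : nat) (e : rel 'I_n) : Prop :=
  (forall u v, e u v = e v u) /\ (forall v, ~~ e v v).

Definition deg_in (n : nat) (e : rel 'I_n) (v : 'I_n) (X : {set 'I_n}) : nat :=
  #|[set u in X | e v u]|.

Definition edges_in (n : nat) (e : rel 'I_n) (A : {set 'I_n}) : nat :=
  #|[set p : 'I_n * 'I_n | [&& p.1 \in A, p.2 \in A, (p.1 < p.2)%N & e p.1 p.2]]|.

Definition min_deg_half (R : realFieldType) (n : nat) (e : rel 'I_n) : Prop :=
  forall v : 'I_n, (n%:R / 2 : R) <= (deg_in e v [set: 'I_n])%:R.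

Definition gamma_close (R : realFieldType) (gamma : R) (n : nat) (e : rel 'I_n) : Prop :=
  exists A : {set 'I_n}, #|A| = n./2 /\ (edges_in e A)%:R <= gamma * (n%:R ^+ 2).

Definition superextremal (R : realFieldType) (alpha eps nu : R) (n : nat)
    (e : rel 'I_n) : Prop :=
  exists A : {set 'I_n}, let B := ~: A in
  [/\ ((#|A| <= #|B|)%N /\ ((#|B| - #|A|)%N%:R <= alpha * n%:R)),
      (#|[set a in A | (deg_in e a B)%:R < (2^-1 - eps) * n%:R]|%:R
                   <= alpha * n%:R) /\
      (forall a, a \in A -> nu * n%:R <= (deg_in e a B)%:R),
      (#|[set b in B | (deg_in e b A)%:R < (2^-1 - eps) * n%:R]|%:R
                   <= alpha * n%:R),
      (forall b, b \in B -> (4^-1 - eps) * n%:R <= (deg_in e b A)%:R)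
    & (#|A| <> n./2 ->
                 forall b, b \in B -> (deg_in e b B)%:R <= 2 * nu * n%:R)].

From HB Require Import structures.
From mathcomp Require Import all_boot all_order all_algebra zify lra.
Import Order.TTheory GRing.Theory Num.Theory.
Set Implicit Arguments. Unset Strict Implicit.

(* Start from a part A0 of size n/2 spanning at
   most gamma n^2 edges and let B0 be its complement.
   - Counting: by the handshake lemma, double counting and the minimum degree,
     few vertices of A0 (resp. B0) have fewer than n/4 neighbours across
     (sets low_A, low_B), few vertices of A0 have eps n/2 neighbours inside,
     and few vertices of B0 miss eps n/4 vertices of A0 (Markov's inequality).
   - Repair: swapping low_A and low_B gives a partition in which every vertex
     has about n/4 neighbours across and almost all have about n/2.
   - Balancing: the repaired partition is unbalanced by at most
     K = 2 (|low_A| + |low_B|) + 1; greedily moving at most K vertices from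
     the larger to the smaller side, preferring vertices with many neighbours
     on their own side, yields the conditions (B1)-(B6). *)

Section Degrees.
Variables (n : nat) (e : rel 'I_n).

Lemma deg_inE (v : 'I_n) (Z : {set 'I_n}) :
  deg_in e v Z = \sum_(u in Z) (e v u : nat).
Proof.
rewrite /deg_in -sum1_card [LHS]big_mkcond [RHS]big_mkcond; apply: eq_bigr => u _.
by rewrite inE; case: (u \in Z); case: (e v u).
Qed.

Lemma deg_in_sub (v : 'I_n) (Z Z' : {set 'I_n}) :
  Z \subset Z' -> (deg_in e v Z <= deg_in e v Z')%N.
Proof.
move=> sZ; apply: subset_leq_card; apply/subsetP=> u; rewrite !inE => /andP[uZ ->].
by rewrite (subsetP sZ _ uZ).
Qed.

Lemma deg_in_card (v : 'I_n) (Z : {set 'I_n}) : (deg_in e v Z <= #|Z|)%N.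
Proof. by apply: subset_leq_card; apply/subsetP=> u; rewrite !inE => /andP[]. Qed.

Lemma deg_in_setC (v : 'I_n) (Z : {set 'I_n}) :
  (deg_in e v Z + deg_in e v (~: Z) = deg_in e v setT)%N.
Proof.
rewrite /deg_in -(cardsID Z [set u in setT | e v u]); congr (_ + _); apply: eq_card=> u;
by rewrite !inE; case: (u \in Z); case: (e v u).
Qed.

Lemma deg_in_setD (v : 'I_n) (Z W : {set 'I_n}) :
  (deg_in e v Z <= deg_in e v (Z :\: W) + #|W|)%N.
Proof.
rewrite /deg_in; apply: leq_trans (leq_card_setU _ _).
apply: subset_leq_card; apply/subsetP=> u; rewrite !inE.
by case: (u \in W); case: (u \in Z); case: (e v u).
Qed.

Hypothesis Ge : simple_graph e.

Lemma deg_in_setD1 (v : 'I_n) (Z : {set 'I_n}) : deg_in e v (Z :\ v) = deg_in e v Z.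
Proof.
case: Ge => _ irr; apply: eq_card => u; rewrite !inE.
by case: (eqVneq u v) => [->|] //=; rewrite (negbTE (irr v)) andbF.
Qed.

Lemma sum_deg_in_swap (X Y : {set 'I_n}) :
  (\sum_(x in X) deg_in e x Y = \sum_(y in Y) deg_in e y X)%N.
Proof.
case: Ge => sym _.
under eq_bigr => x _ do rewrite deg_inE.
under [RHS]eq_bigr => y _ do rewrite deg_inE.
by rewrite exchange_big /=; apply: eq_bigr => y _; apply: eq_bigr => x _; rewrite sym.
Qed.

Lemma handshake (A : {set 'I_n}) :
  (\sum_(a in A) deg_in e a A = 2 * edges_in e A)%N.
Proof.
case: Ge => sym irr.
pose g (a u : 'I_n) : nat := [&& a \in A, u \in A, (a < u)%N & e a u].
have edgesE : edges_in e A = (\sum_a \sum_u g a u)%N.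
  rewrite /edges_in -sum1_card big_mkcond /= pair_big /=.
  by apply: eq_bigr => p _; rewrite inE /g; case: p.
have degsE : (\sum_(a in A) deg_in e a A = \sum_a \sum_u (g a u + g u a))%N.
  rewrite big_mkcond /=; apply: eq_bigr => a _; rewrite deg_inE big_mkcond /=.
  case aA: (a \in A); last by rewrite big1 // => u _; rewrite /g aA /= andbF.
  apply: eq_bigr => u _; rewrite /g aA /= (sym u a).
  case uA: (u \in A) => //=.
  case: (ltngtP a u) => [h|h|h] /=; rewrite ?andbF ?addn0 //.
  have -> : a = u by apply: val_inj.
  by rewrite (negbTE (irr u)).
rewrite degsE edgesE; under eq_bigr => a _ do rewrite big_split.
by rewrite big_split /= [X in (_ + X)%N]exchange_big /= addnn -mul2n.
Qed.

End Degrees.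

Local Open Scope ring_scope.

Lemma card_large_values (R : realFieldType) (T : finType) (P : {set T})
    (f : T -> R) (c : R) :
  (forall v, v \in P -> 0 <= f v) ->
  #|[set v in P | c <= f v]|%:R * c <= \sum_(v in P) f v.
Proof.
move=> f0; case: (lerP 0 c) => c0; last first.
  by apply: le_trans (sumr_ge0 _ f0); rewrite mulr_ge0_le0 // ltW.
rewrite mulr_natl -sumr_const big_mkcond [X in _ <= X]big_mkcond /=.
apply: ler_sum => v _; rewrite inE.
by case vP: (v \in P) => //=; case: ifP => // _; apply: f0.
Qed.

Lemma half_bounds (n : nat) : (2 * n./2 <= n)%N /\ (n <= 2 * n./2 + 1)%N.
Proof. rewrite -divn2; lia. Qed.

Section Balancing.
Variables (R : realFieldType) (n : nat) (e : rel 'I_n).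
Hypothesis Ge : simple_graph e.
Let N : R := n%:R.

(* It is obtained as a largest set with the first two properties. *)
Lemma greedy_absorption (nu : R) (L : {set 'I_n}) (k : nat) :
  exists M : {set 'I_n},
  [/\ M \subset L, (#|M| <= k)%N,
      forall m, m \in M -> 2 * nu * N - #|M|%:R <= (deg_in e m (L :\: M))%:R
    & (#|M| < k)%N -> forall b, b \in L :\: M -> (deg_in e b (L :\: M))%:R <= 2 * nu * N].
Proof.
pose good (M : {set 'I_n}) := [&& M \subset L, (#|M| <= k)%N &
   [forall m in M, 2 * nu * N - #|M|%:R <= (deg_in e m (L :\: M))%:R]].
have good0 : good set0 by rewrite /good sub0set cards0 /=; apply/forall_inP => m; rewrite inE.
case: (@arg_maxnP _ set0 good (fun M : {set 'I_n} => #|M|) good0) => M goodM Mmax.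
case/and3P: goodM => ML Mk /forall_inP Mdeg.
exists M; split => // ltMk b bLM; rewrite leNgt; apply/negP => hb.
case/setDP: bLM => bL bM.
have goodbM : good (b |: M).
  apply/and3P; split; first by rewrite subUset sub1set bL ML.
    by rewrite cardsU1 bM.
  apply/forall_inP => m; rewrite !inE => /orP[/eqP ->|mM].
    have -> : L :\: (b |: M) = (L :\: M) :\ b.
      by apply/setP => x; rewrite !inE; case: (x == b); case: (x \in M).
    by rewrite deg_in_setD1 //; apply: le_trans (ltW hb); rewrite lerBlDr lerDl.
  have -> : L :\: (b |: M) = (L :\: M) :\: [set b].
    by apply/setP => x; rewrite !inE; case: (x == b); case: (x \in M).
  have := Mdeg m mM; have := deg_in_setD e m (L :\: M) [set b].
  by rewrite cards1 cardsU1 bM /= -(ler_nat R) !natrD; lra.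
by have := Mmax _ goodbM; rewrite cardsU1 bM /= add1n ltnn.
Qed.

(* Balancing: a partition S, ~: S that is nearly balanced, has S on the smaller
   side, and has robust cross degrees becomes a superextremal biclique after
   moving a greedily chosen set M of at most K vertices from ~: S to S; the
   slack K in the degree conditions on S pays for the vertices removed. *)
Lemma balanced_superextremal (alpha eps nu : R) (S : {set 'I_n}) (K : nat) :
  (#|S| <= #|~: S|)%N -> (#|~: S| <= #|S| + K)%N ->
  K%:R <= nu * N -> K%:R <= alpha * N ->
  (forall v, v \in S -> nu * N + K%:R <= (deg_in e v (~: S))%:R) ->
  (forall v, v \in ~: S -> (4^-1 - eps) * N <= (deg_in e v S)%:R) ->
  #|[set v in S | (deg_in e v (~: S))%:R < (2^-1 - eps) * N + K%:R]|%:R + K%:R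
     <= alpha * N ->
  #|[set v in ~: S | (deg_in e v S)%:R < (2^-1 - eps) * N + K%:R]|%:R <= alpha * N ->
  superextremal alpha eps nu e.
Proof.
set L := ~: S => SL LS KN Kal degS degL badS badL.
have cardSL : (#|S| + #|L| = n)%N by rewrite cardsC card_ord.
set k := (n./2 - #|S|)%N.
have kK : (k <= K)%N by rewrite /k -divn2; lia.
have [M [ML Mk Mdeg Mfull]] := greedy_absorption nu L k.
have MK : (#|M|%:R <= K%:R :> R) by rewrite ler_nat (leq_trans Mk).
have BE : ~: (S :|: M) = L :\: M by rewrite setCU setDE.
have cardA : #|S :|: M| = (#|S| + #|M|)%N.
  rewrite cardsU (_ : S :&: M = set0) ?cards0 ?subn0 //.
  by apply/disjoint_setI0; rewrite disjoint_sym -[S]setCK -subsets_disjoint.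
have cardB : #|L :\: M| = (n - (#|S| + #|M|))%N.
  by rewrite -BE; have := cardsC (S :|: M); rewrite card_ord cardA; lia.
have degA v : (deg_in e v S <= deg_in e v (S :|: M))%N by apply/deg_in_sub/subsetUl.
exists (S :|: M); cbv zeta; rewrite BE cardA cardB; split.
- split; first by rewrite /k -divn2 in Mk *; lia.
  by apply: le_trans Kal; rewrite ler_nat /k -divn2 in Mk *; lia.
- split=> [|a].
  + apply: le_trans badS; rewrite -natrD.
    apply: le_trans (_ : (#|M| + #|[set v in S | ((deg_in e v L)%:R <
             (2^-1 - eps) * N + K%:R)%R]|)%N%:R <= _); last by rewrite !natrD; lra.
    rewrite ler_nat addnC; apply: leq_trans (leq_card_setU _ _); apply: subset_leq_card.
    apply/subsetP => v; rewrite !inE => /andP[/orP[vS|->] hv]; rewrite ?orbT //.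
    rewrite vS /=; have := deg_in_setD e v L M; rewrite -(ler_nat R) natrD; lra.
  + rewrite inE => /orP[aS|aM]; last by have := Mdeg a aM; lra.
    have := degS a aS; have := deg_in_setD e a L M; rewrite -(ler_nat R) natrD; lra.
- apply: le_trans badL; rewrite ler_nat; apply: subset_leq_card; apply/subsetP => v.
  rewrite !inE => /andP[/andP[_ vS] hv]; rewrite vS /=.
  by have := degA v; rewrite -(ler_nat R); have := ler0n R K; lra.
- move=> b /setDP[bL _]; have := degA b; rewrite -(ler_nat R); have := degL b bL; lra.
- move=> neq; apply: Mfull; move: Mk neq LS cardSL; rewrite /k -!divn2; lia.
Qed.

End Balancing.

(* The Markov bounds of the cleanup below, with E <= g N (g = gamma N), give
   explicit bounds on the numbers x, y, m1, m2 of exceptional vertices. *)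
Lemma exceptional_bounds (R : realFieldType) (N g eps E a0 x y m1 m2 : R) :
  4 <= N -> 0 < eps -> 0 <= g -> E <= g * N -> 2 * a0 <= N -> N <= 2 * a0 + 1 ->
  x * (N / 4) <= 2 * E -> y * (a0 - N / 4) <= N / 4 + 2 * E ->
  m1 * (eps * N / 2) <= 2 * E -> m2 * (eps * N / 4) <= N / 4 + 2 * E ->
  [/\ x <= 8 * g, y <= 2 + 16 * g, eps * m1 <= 4 * g & eps * m2 <= 1 + 8 * g].
Proof. by move=> *; split; nra. Qed.

(* With 100 gamma <= alpha eps and alpha eps N >= 100, the exceptional sets are
   small enough for all the requirements of the balancing step; here
   K = 2 (x + y) + 1 is the imbalance to be absorbed. *)
Lemma parameter_bounds (R : realFieldType) (N a eps nu g x y m1 m2 : R) :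
  0 < a -> a <= nu -> nu <= 1 / 16 -> 0 < eps -> eps <= nu -> 0 <= g ->
  100 * g <= a * eps * N -> 100 <= a * eps * N ->
  0 <= x -> x <= 8 * g -> 0 <= y -> y <= 2 + 16 * g ->
  0 <= m1 -> eps * m1 <= 4 * g -> 0 <= m2 -> eps * m2 <= 1 + 8 * g ->
  let K := 2 * (x + y) + 1 in
  [/\ K <= nu * N, K <= a * N, nu * N + K <= N / 4 - (x + y) &
      (4^-1 - eps) * N <= N / 4 - (x + y)] /\
  [/\ y + m1 + K <= a * N, x + m2 + K <= a * N,
      K + y <= eps * N / 2 & K + x + 1 / 2 <= 3 * eps * N / 4].
Proof.
move=> a_gt0 anu nu16 eps0 enu g0 hg hP x0 hx y0 hy m10 hm1 m20 hm2 K.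
have N0 : 0 < N.
  rewrite ltNge; apply/negP => N0.
  by have := N0; rewrite -(pmulr_rle0 _ (mulr_gt0 a_gt0 eps0)); lra.
have aN : 16 * (a * eps * N) <= a * N by nra.
have eN : 16 * (a * eps * N) <= eps * N by nra.
have NN : 16 * (eps * N) <= N by nra.
have nuN : a * N <= nu * N by nra.
have nuN2 : 16 * (nu * N) <= N by nra.
have m1b : m1 <= a * N / 20 by rewrite -(ler_pM2l eps0); nra.
have m2b : m2 <= a * N / 10 by rewrite -(ler_pM2l eps0); nra.
by rewrite /K; split; split; lra.
Qed.

Section Cleanup.
Variables (R : realFieldType) (n : nat) (e : rel 'I_n) (A0 : {set 'I_n}).
Hypotheses (Ge : simple_graph e) (Gd : min_deg_half R e) (cardA0 : #|A0| = n./2).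
Let N : R := n%:R.
Let B0 := ~: A0.
Let a0 : R := #|A0|%:R.
Let E : R := (edges_in e A0)%:R.

Lemma deg_halves (v : 'I_n) : N / 2 <= (deg_in e v A0)%:R + (deg_in e v B0)%:R.
Proof. by rewrite -natrD deg_in_setC; apply: Gd. Qed.

Lemma size_halves : [/\ 2 * a0 <= N, N <= 2 * a0 + 1 & #|B0|%:R = N - a0].
Proof.
have [lo hi] := half_bounds n.
have cardB0 : (#|A0| + #|B0| = n)%N by rewrite cardsC card_ord.
rewrite -cardA0 in lo hi; move: lo hi cardB0.
rewrite -(ler_nat R) -[(n <= _)%N](ler_nat R) natrD natrM => lo hi.
move=> /(congr1 (fun m => m%:R : R)); rewrite natrD -/a0 -/N => cardB0.
by split; lra.
Qed.

Lemma sum_deg_inside : \sum_(a in A0) (deg_in e a A0)%:R = 2 * E.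
Proof. by rewrite -natr_sum handshake // natrM. Qed.

(* The total deficiency a0 - d(b, A0) of the vertices b of B0 is small: by
   double counting it is at most a0 (N/2 - a0) + 2E <= N/4 + 2E. *)
Lemma sum_deficit : \sum_(b in B0) (a0 - (deg_in e b A0)%:R) <= N / 4 + 2 * E.
Proof.
have [lo hi cardB0] := size_halves.
have cross : a0 * (N / 2) - 2 * E <= \sum_(a in A0) (deg_in e a B0)%:R.
  have : \sum_(a in A0) (N / 2 - (deg_in e a A0)%:R) <= \sum_(a in A0) (deg_in e a B0)%:R.
    by apply: ler_sum => a _; have := deg_halves a; lra.
  by rewrite sumrB sumr_const sum_deg_inside -mulr_natr -/a0; lra.
have slack : a0 * (N / 2 - a0) <= a0 / 2.
  have half : N / 2 - a0 <= 1 / 2 by lra.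
  by apply: le_trans (ler_wpM2l (ler0n R #|A0|) half) _; lra.
rewrite sumrB sumr_const -natr_sum sum_deg_in_swap // natr_sum -[a0 *+ _]mulr_natr cardB0; lra.
Qed.

Definition low_A : {set 'I_n} := [set a in A0 | (deg_in e a B0)%:R < N / 4].
Definition low_B : {set 'I_n} := [set b in B0 | (deg_in e b A0)%:R < N / 4].
Definition repaired : {set 'I_n} := (A0 :\: low_A) :|: low_B.
Definition heavy_A (eps : R) : {set 'I_n} :=
  [set a in A0 | eps * N / 2 <= (deg_in e a A0)%:R].
Definition deficient_B (eps : R) : {set 'I_n} :=
  [set b in B0 | eps * N / 4 <= a0 - (deg_in e b A0)%:R].

Lemma deficit_ge0 (b : 'I_n) : b \in B0 -> 0 <= a0 - (deg_in e b A0)%:R.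
Proof. by move=> _; rewrite subr_ge0 ler_nat deg_in_card. Qed.

Lemma card_low_A : #|low_A|%:R * (N / 4) <= 2 * E.
Proof.
rewrite -sum_deg_inside; apply: le_trans (card_large_values (N / 4) _) => //.
apply: ler_wpM2r; first by apply: divr_ge0; apply: ler0n.
rewrite ler_nat; apply/subset_leq_card/subsetP => v; rewrite !inE => /andP[-> lowv] /=.
by have := deg_halves v; lra.
Qed.

Lemma card_low_B : #|low_B|%:R * (a0 - N / 4) <= N / 4 + 2 * E.
Proof.
apply: le_trans sum_deficit; case: (lerP 0 (a0 - N / 4)) => c0; last first.
  by apply: le_trans (sumr_ge0 _ deficit_ge0); rewrite mulr_ge0_le0 // ltW.
apply: le_trans (card_large_values _ deficit_ge0); apply: ler_wpM2r => //.
rewrite ler_nat; apply/subset_leq_card/subsetP => v; rewrite !inE => /andP[-> lowv] /=; lra.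
Qed.

Lemma card_heavy_A (eps : R) : #|heavy_A eps|%:R * (eps * N / 2) <= 2 * E.
Proof. by rewrite -sum_deg_inside; apply: card_large_values. Qed.

Lemma card_deficient_B (eps : R) :
  #|deficient_B eps|%:R * (eps * N / 4) <= N / 4 + 2 * E.
Proof. by apply: le_trans sum_deficit; apply: card_large_values deficit_ge0. Qed.

Lemma repaired_sub : A0 :\: low_A \subset repaired.
Proof. exact: subsetUl. Qed.

Lemma repaired_subC : B0 :\: low_B \subset ~: repaired.
Proof.
apply/subsetP => v; rewrite !inE => /andP[/negbTE vY /negbTE vA].
by rewrite vY vA andbF.
Qed.

Lemma repaired_deg_out (v : 'I_n) : v \in repaired ->
  N / 4 - (#|low_A|%:R + #|low_B|%:R) <= (deg_in e v (~: repaired))%:R.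
Proof.
move=> vA; have cross : N / 4 <= (deg_in e v B0)%:R.
  move: vA; rewrite !inE => /orP[/andP[vX vA0]|/andP[vB vY]].
    by rewrite vA0 /= -leNgt in vX.
  by have := deg_halves v; lra.
have := deg_in_setD e v B0 low_B; have := deg_in_sub e v repaired_subC.
rewrite -!(ler_nat R) natrD; have := ler0n R #|low_A|; lra.
Qed.

Lemma repaired_deg_in (v : 'I_n) : v \in ~: repaired ->
  N / 4 - (#|low_A|%:R + #|low_B|%:R) <= (deg_in e v repaired)%:R.
Proof.
move=> vB; have cross : N / 4 <= (deg_in e v A0)%:R.
  move: vB; rewrite !inE negb_or negb_and negbK => /andP[/orP[/andP[_ vX]|vA0] vY].
    by have := deg_halves v; lra.
  by rewrite vA0 /= -leNgt in vY.
have := deg_in_setD e v A0 low_A; have := deg_in_sub e v repaired_sub.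
rewrite -!(ler_nat R) natrD; have := ler0n R #|low_B|; lra.
Qed.

Lemma repaired_bad_A (eps t : R) : t + #|low_B|%:R <= eps * N / 2 ->
  (#|[set v in repaired | ((deg_in e v (~: repaired))%:R < (2^-1 - eps) * N + t)%R]|
     <= #|low_B| + #|heavy_A eps|)%N.
Proof.
move=> small; apply: leq_trans (leq_card_setU low_B (heavy_A eps)).
apply/subset_leq_card/subsetP => v; rewrite inE => /andP[vA bad].
rewrite inE; case vY: (v \in low_B) => //=.
have vA0 : v \in A0 by move: vA; rewrite in_setU vY orbF in_setD => /andP[_ ->].
rewrite inE vA0 /=; have := deg_halves v.
have := deg_in_setD e v B0 low_B; have := deg_in_sub e v repaired_subC.
by rewrite -!(ler_nat R) natrD; lra.
Qed.

Lemma repaired_bad_B (eps t : R) : t + #|low_A|%:R + 1 / 2 <= 3 * eps * N / 4 ->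
  (#|[set v in ~: repaired | ((deg_in e v repaired)%:R < (2^-1 - eps) * N + t)%R]|
     <= #|low_A| + #|deficient_B eps|)%N.
Proof.
move=> small; have [lo hi _] := size_halves.
apply: leq_trans (leq_card_setU low_A (deficient_B eps)).
apply/subset_leq_card/subsetP => v; rewrite inE => /andP[vB bad].
rewrite inE; case vX: (v \in low_A) => //=.
have vB0 : v \in B0.
  move: vB; rewrite !in_setC; apply: contra => vA0.
  by apply: (subsetP repaired_sub); rewrite inE vX.
rewrite inE vB0 /=; have := deg_in_setD e v A0 low_A; have := deg_in_sub e v repaired_sub.
by rewrite -!(ler_nat R) natrD; lra.
Qed.

Lemma repaired_card :
  (#|repaired| <= #|A0| + #|low_B|)%N /\ (#|A0| <= #|repaired| + #|low_A|)%N.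
Proof.
split; first by apply: leq_trans (leq_card_setU _ _) _; rewrite leq_add2r subset_leq_card ?subsetDl.
apply: leq_trans (_ : #|(A0 :\: low_A) :|: low_A| <= _)%N.
  by apply/subset_leq_card/subsetP => v vA; rewrite in_setU in_setD vA andbT; case: (v \in low_A).
by apply: leq_trans (leq_card_setU _ _) _; rewrite leq_add2r subset_leq_card // repaired_sub.
Qed.

Lemma repaired_superextremal (alpha eps nu : R) (K : nat) :
  let x : R := #|low_A|%:R in let y : R := #|low_B|%:R in
  (2 * (#|low_A| + #|low_B|) < K)%N ->
  K%:R <= nu * N -> K%:R <= alpha * N ->
  nu * N + K%:R <= N / 4 - (x + y) -> (4^-1 - eps) * N <= N / 4 - (x + y) ->
  y + #|heavy_A eps|%:R + K%:R <= alpha * N ->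
  x + #|deficient_B eps|%:R + K%:R <= alpha * N ->
  K%:R + y <= eps * N / 2 -> K%:R + x + 1 / 2 <= 3 * eps * N / 4 ->
  superextremal alpha eps nu e.
Proof.
move=> x y Kxy KN Kal crossK crossEps badAK badBK slackA slackB.
have [lo hi] := half_bounds n; rewrite -cardA0 in lo hi.
have [up down] := repaired_card.
have cards : (#|repaired| + #|~: repaired| = n)%N by rewrite cardsC card_ord.
have dA := repaired_deg_out; have dB := repaired_deg_in; have K0 := ler0n R K.
case: (leqP #|repaired| #|~: repaired|) => side.
- apply: (balanced_superextremal Ge (S := repaired) (K := K)) => //; first lia.
  + by move=> v /dA; rewrite -/N -/x -/y; lra.
  + by move=> v /dB; rewrite -/N -/x -/y; lra.
  + by have := repaired_bad_A slackA; rewrite -(ler_nat R) natrD -/N -/x -/y; lra.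
  + by have := repaired_bad_B slackB; rewrite -(ler_nat R) natrD -/N -/x -/y; lra.
- apply: (balanced_superextremal Ge (S := ~: repaired) (K := K)); rewrite ?setCK //.
  + exact: ltnW.
  + lia.
  + by move=> v /dB; rewrite -/N -/x -/y; lra.
  + by move=> v /dA; rewrite -/N -/x -/y; lra.
  + by have := repaired_bad_B slackB; rewrite -(ler_nat R) natrD -/N -/x -/y; lra.
  + by have := repaired_bad_A slackA; rewrite -(ler_nat R) natrD -/N -/x -/y; lra.
Qed.

Lemma close_superextremal (alpha eps nu gamma : R) :
  E <= gamma * N ^+ 2 ->
  0 < alpha -> alpha <= nu -> nu <= 1 / 16 -> 0 < eps -> eps <= nu -> 0 < gamma ->
  100 * gamma <= alpha * eps -> 100 <= alpha * eps * N ->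
  superextremal alpha eps nu e.
Proof.
move=> sparse a_gt0 anu nu16 eps_gt0 enu g_gt0 small large.
have N4 : 4 <= N.
  have ae : alpha * eps <= 1 / 256 by nra.
  have : 0 <= (1 / 256 - alpha * eps) * N by apply: mulr_ge0; [lra | apply: ler0n].
  lra.
have sparse' : E <= gamma * N * N by rewrite -mulrA -expr2.
have [lo hi _] := size_halves.
have gN : 0 <= gamma * N by apply: mulr_ge0; [exact: ltW | apply: ler0n].
have gap : 100 * (gamma * N) <= alpha * eps * N.
  by rewrite mulrA; apply: ler_wpM2r => //; apply: ler0n.
have [hx hy hm1 hm2] := exceptional_bounds N4 eps_gt0 gN sparse' lo hi
  card_low_A card_low_B (card_heavy_A eps) (card_deficient_B eps).
have Kval : ((2 * (#|low_A| + #|low_B|)).+1)%N%:R = 2 * (#|low_A|%:R + #|low_B|%:R) + 1 :> R.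
  by rewrite -[(2 * _).+1]addn1 !natrD; lra.
have := parameter_bounds a_gt0 anu nu16 eps_gt0 enu gN gap large (ler0n _ _) hx (ler0n _ _) hy
  (ler0n _ _) hm1 (ler0n _ _) hm2.
rewrite -Kval => -[[c1 c2 c3 c4] [c5 c6 c7 c8]].
exact: (repaired_superextremal (K := (2 * (#|low_A| + #|low_B|)).+1%N)).
Qed.

End Cleanup.

Theorem mainTheorem11 (R : archiRealFieldType) :
  exists2 nu0 : R, 0 < nu0 &
  forall nu : R, 0 < nu -> nu <= nu0 ->
  exists2 alpha0 : R, 0 < alpha0 &
  forall alpha eps : R, 0 < alpha -> alpha <= alpha0 -> 0 < eps -> eps <= alpha0 ->
  exists2 gamma0 : R, 0 < gamma0 &
  forall gamma : R, 0 < gamma -> gamma <= gamma0 ->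
  exists n0 : nat, forall n : nat, (n0 <= n)%N ->
  forall e : rel 'I_n, simple_graph e ->
    min_deg_half R e -> gamma_close gamma e ->
    superextremal alpha eps nu e.
Proof.
exists (1 / 16); first lra.
move=> nu nu_gt0 nu16; exists nu => // alpha eps a_gt0 anu eps_gt0 enu.
have ae_gt0 : 0 < alpha * eps by apply: mulr_gt0.
exists (alpha * eps / 100); first lra.
move=> gamma g_gt0 g_small; exists (Num.bound (100 / (alpha * eps))).
move=> n large e Ge Gd [A0 [cardA0 sparse]].
have n_large : 100 / (alpha * eps) < n%:R.
  apply: lt_le_trans (archi_boundP _) _; first by apply: divr_ge0; lra.
  by rewrite ler_nat.
apply: (close_superextremal Ge Gd cardA0 sparse) => //; try lra.
by move: n_large; rewrite ltr_pdivrMr // mulrC => /ltW.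
Qed.
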